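(* Let $S=s_1,\ldots,s_n$ be a sequence of positive real numbers, let $\alpha>1$, $\gamma>0$, let $k$ be a positive integer and $\epsilon>0$. Let $(L^*,\beta^* )$ be an optimal solution of $\textsc{Exp}(\alpha)$ for $S,\alpha,\gamma,k$, and let $g=(\prod_{i=1}^n s_i)^{1/n}$. Let $(L,\beta)$ be the output of $\textit{ExpAlpha}(S,\alpha,\gamma,k,\epsilon)$. Then \[ \mathrm{score}_{\exp}(L,S;\alpha,\beta,\gamma)-n\log g\le(1+\epsilon)\big(\mathrm{score}_{\exp}(L^*,S;\alpha,\beta^*,\gamma)-n\log g\big). \] Moreover, if $g\ge1$, then $\mathrm{score}_{\exp}(L,S;\alpha,\beta,\gamma)\le(1+\epsilon)\,\mathrm{score}_{\exp}(L^*,S;\alpha,\beta^*,\gamma)$.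
   Context: A level sequence is $L=\ell_1,\ldots,\ell_n$ of integers with $0\le\ell_i\le k$; set $\ell_0=0$. The penalty is $\mathrm{pen}(x,y)=\max(y-x,0)\,\gamma\log n$. The exponential density is $p_{\exp}(s;\lambda)=\lambda e^{-\lambda s}$. For $\alpha\ge1$, $\beta>0$: $\mathrm{score}_{\exp}(L,S;\alpha,\beta,\gamma)=\sum_{i=1}^n\big[-\log p_{\exp}(s_i;\beta\alpha^{\ell_i})+\mathrm{pen}(\ell_{i-1},\ell_i)\big]$. Problem $\textsc{Exp}(\alpha)$: given $S,\alpha,\gamma,k$, find $L$ and $\beta>0$ minimizing this score. $\textit{Viterbi}(S,\alpha,\beta,\gamma,k,p_{\exp})$ returns a level sequence minimizing the score for fixed $\alpha,\beta$. Algorithm $\textit{ExpAlpha}(S,\alpha,\gamma,k,\epsilon)$: let $\mu=\frac1n\sum_i s_i$ and $\beta=1/\mu$; while $\beta\ge1/(\alpha^k\mu)$: run $L=\textit{Viterbi}(S,\alpha,\beta,\gamma,k,p_{\exp})$ and set $\beta\leftarrow\beta/(1+\epsilon)$. Return the tested pair $(L,\beta)$ with the smallest score. *)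

From Stdlib Require Import Reals Lra Lia.
Open Scope R_scope.

Fixpoint sum1n (n : nat) (f : nat -> R) : R :=
  match n with
  | O => 0
  | S m => sum1n m f + f (S m)
  end.

Fixpoint prod1n (n : nat) (f : nat -> R) : R :=
  match n with
  | O => 1
  | S m => prod1n m f * f (S m)
  end.

(* A level sequence is L : nat -> nat, read at indices 1..n;
   the convention l_0 = 0 is enforced by [prevlvl]. *)
Definition level_seq (n k : nat) (L : nat -> nat) : Prop :=
  forall i, (1 <= i <= n)%nat -> (L i <= k)%nat.

Definition prevlvl (L : nat -> nat) (i : nat) : nat :=
  match i with
  | O => O
  | S O => O
  | S j => L j
  end.

Definition pen (n : nat) (gamma : R) (x y : nat) : R :=
  Rmax (INR y - INR x) 0 * gamma * ln (INR n).

Definition p_exp (s lambda : R) : R := lambda * exp (- lambda * s).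

Definition score_exp (n : nat) (s : nat -> R) (L : nat -> nat)
  (alpha beta gamma : R) : R :=
  sum1n n (fun i =>
    - ln (p_exp (s i) (beta * alpha ^ (L i))) + pen n gamma (prevlvl L i) (L i)).

Definition exp_optimal (n : nat) (s : nat -> R) (alpha gamma : R) (k : nat)
  (Lopt : nat -> nat) (bopt : R) : Prop :=
  level_seq n k Lopt /\ 0 < bopt /\
  forall L beta, level_seq n k L -> 0 < beta ->
    score_exp n s Lopt alpha bopt gamma <= score_exp n s L alpha beta gamma.

(* Any possible output of Viterbi(S, alpha, beta, gamma, k, p_exp):
   a level sequence minimizing the score for fixed alpha, beta. *)
Definition viterbi_out (n : nat) (s : nat -> R) (alpha beta gamma : R) (k : nat)
  (L : nat -> nat) : Prop :=
  level_seq n k L /\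
  forall L', level_seq n k L' ->
    score_exp n s L alpha beta gamma <= score_exp n s L' alpha beta gamma.

Definition mean (n : nat) (s : nat -> R) : R := sum1n n s / INR n.

Definition beta_j (n : nat) (s : nat -> R) (eps : R) (j : nat) : R :=
  (1 / mean n s) / (1 + eps) ^ j.

(* beta_j is tested by the while loop iff beta_j >= 1/(alpha^k mu)
   (the sequence beta_j is decreasing, so the loop tests exactly these j). *)
Definition tested (n : nat) (s : nat -> R) (alpha : R) (k : nat) (eps : R)
  (j : nat) : Prop :=
  beta_j n s eps j >= 1 / (alpha ^ k * mean n s).

(* (L, beta) is a possible output of ExpAlpha(S, alpha, gamma, k, eps):
   for some choice Ls j of the Viterbi output at each tested beta_j,
   (L, beta) is a tested pair of smallest score. *)
Definition expalpha_out (n : nat) (s : nat -> R) (alpha gamma : R) (k : nat)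
  (eps : R) (L : nat -> nat) (beta : R) : Prop :=
  exists (Ls : nat -> nat -> nat) (j : nat),
    (forall j', tested n s alpha k eps j' ->
        viterbi_out n s alpha (beta_j n s eps j') gamma k (Ls j')) /\
    tested n s alpha k eps j /\
    L = Ls j /\ beta = beta_j n s eps j /\
    (forall j', tested n s alpha k eps j' ->
        score_exp n s (Ls j) alpha (beta_j n s eps j) gamma <=
        score_exp n s (Ls j') alpha (beta_j n s eps j') gamma).

Definition geo_mean (n : nat) (s : nat -> R) : R :=
  Rpower (prod1n n s) (1 / INR n).

From Stdlib Require Import Reals Lra Lia.
Open Scope R_scope.

(* For a fixed level sequence L the score is
   [- n ln beta + beta * W_L + const_L] with [W_L = sum alpha^(L i) s_i],
   minimized at [bhat = n / W_L], and exceeding its minimum by exactly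
   [n (t - 1 - ln t)] where [t = beta / bhat].  For an optimal L* the value
   [bhat] lies in the range swept by ExpAlpha, so some tested [beta_j]
   satisfies [bhat <= beta_j < (1 + eps) bhat]; the Viterbi level sequence at
   [beta_j] is at least as good as L*, whose excess there is below [n eps].
   Hence the output scores at most [OPT + n eps].  Finally, termwise
   [-ln (l e^(-l s)) = (l s - 1 - ln (l s)) + 1 + ln s >= 1 + ln s], so
   [OPT - n ln g >= n], which turns the additive bound into the
   multiplicative one. *)

Lemma sum1n_le n f g : (forall i, (1 <= i <= n)%nat -> f i <= g i) ->
  sum1n n f <= sum1n n g.
Proof.
  induction n as [|n IH]; simpl; intros Hfg; [lra|].
  assert (sum1n n f <= sum1n n g) by (apply IH; intros; apply Hfg; lia).
  assert (f (S n) <= g (S n)) by (apply Hfg; lia).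
  lra.
Qed.

Lemma sum1n_ext n f g : (forall i, (1 <= i <= n)%nat -> f i = g i) ->
  sum1n n f = sum1n n g.
Proof.
  intros Hfg; apply Rle_antisym; apply sum1n_le; intros i Hi; rewrite (Hfg i Hi); lra.
Qed.

Lemma sum1n_add n f g : sum1n n (fun i => f i + g i) = sum1n n f + sum1n n g.
Proof. induction n as [|n IH]; simpl; [lra|]. rewrite IH; lra. Qed.

Lemma sum1n_scal n c f : sum1n n (fun i => c * f i) = c * sum1n n f.
Proof. induction n as [|n IH]; simpl; [lra|]. rewrite IH; lra. Qed.

Lemma sum1n_const n c : sum1n n (fun _ => c) = INR n * c.
Proof. induction n as [|n IH]; simpl sum1n; [simpl; lra|]. rewrite IH, S_INR; lra. Qed.

Lemma sum1n_pos n f : (0 < n)%nat -> (forall i, (1 <= i <= n)%nat -> 0 < f i) ->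
  0 < sum1n n f.
Proof.
  intros Hn Hf; destruct n as [|m]; [lia|]; simpl.
  assert (sum1n m (fun _ => 0) <= sum1n m f) by (apply sum1n_le; intros; left; apply Hf; lia).
  rewrite sum1n_const in H.
  assert (0 < f (S m)) by (apply Hf; lia).
  lra.
Qed.

Lemma prod1n_pos n f : (forall i, (1 <= i <= n)%nat -> 0 < f i) -> 0 < prod1n n f.
Proof.
  induction n as [|n IH]; simpl; intros Hf; [lra|].
  apply Rmult_lt_0_compat; [apply IH; intros; apply Hf|apply Hf]; lia.
Qed.

Lemma ln_prod1n n f : (forall i, (1 <= i <= n)%nat -> 0 < f i) ->
  ln (prod1n n f) = sum1n n (fun i => ln (f i)).
Proof.
  induction n as [|n IH]; simpl; intros Hf; [apply ln_1|].
  rewrite ln_mult, IH; [reflexivity|..]; intros; try apply Hf; try lia.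
  apply prod1n_pos; intros; apply Hf; lia.
Qed.

Lemma ln_le_sub1 x : 0 < x -> ln x <= x - 1.
Proof. intros Hx; pose proof (exp_ineq1_le (ln x)); rewrite exp_ln in H; lra. Qed.

Lemma ln_nonneg x : 1 <= x -> 0 <= ln x.
Proof.
  intros Hx; assert (0 < / x) by (apply Rinv_0_lt_compat; lra).
  pose proof (ln_le_sub1 (/ x) H) as Hinv; rewrite ln_Rinv in Hinv by lra.
  assert (/ x <= 1) by (rewrite <- Rinv_1; apply Rinv_le_contravar; lra).
  lra.
Qed.

Lemma geometric_grid_hit b0 q x : 1 < q -> 0 < x <= b0 ->
  exists j, x <= b0 / q ^ j < q * x.
Proof.
  intros Hq [Hx Hxb].
  destruct (Pow_x_infinity q) with (b := b0 / x + 1) as [N HN]; [rewrite Rabs_pos_eq; lra|].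
  specialize (HN N (le_n N)); rewrite Rabs_pos_eq in HN by (apply pow_le; lra).
  assert (HqN : 0 < q ^ N) by (apply pow_lt; lra).
  assert (Hbelow : b0 / q ^ N < x).
  { apply Rmult_lt_reg_r with (q ^ N); [exact HqN|].
    replace (b0 / q ^ N * q ^ N) with (b0 / x * x) by (field; lra).
    nra. }
  clear HN HqN; induction N as [|N IH].
  - simpl in Hbelow; lra.
  - destruct (Rlt_le_dec (b0 / q ^ N) x) as [Hlt|Hle]; [exact (IH Hlt)|].
    exists N; split; [exact Hle|].
    replace (b0 / q ^ N) with (q * (b0 / q ^ S N)) by (simpl; field; split; apply Rgt_not_eq; try apply pow_lt; lra).
    apply Rmult_lt_compat_l; lra.
Qed.

Section ScoreForFixedLevels.

Variables (n : nat) (s : nat -> R) (alpha gamma : R).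
Hypothesis alpha_gt0 : 0 < alpha.

Definition weighted_sum (L : nat -> nat) : R :=
  sum1n n (fun i => alpha ^ L i * s i).

Definition level_cost (L : nat -> nat) : R :=
  sum1n n (fun i => - ln (alpha ^ L i) + pen n gamma (prevlvl L i) (L i)).

Definition beta_hat (L : nat -> nat) : R := INR n / weighted_sum L.

Lemma score_exp_decomp L beta : 0 < beta ->
  score_exp n s L alpha beta gamma =
  - INR n * ln beta + beta * weighted_sum L + level_cost L.
Proof.
  intros Hb; unfold score_exp, weighted_sum, level_cost, p_exp.
  rewrite (sum1n_ext n _ (fun i => (fun _ => - ln beta) i
     + ((fun i => beta * (alpha ^ L i * s i)) i
     + (fun i => - ln (alpha ^ L i) + pen n gamma (prevlvl L i) (L i)) i))).
  - rewrite !sum1n_add, sum1n_const, sum1n_scal; lra.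
  - intros i _; assert (0 < alpha ^ L i) by (apply pow_lt; lra).
    rewrite ln_mult, ln_exp, ln_mult by (try apply Rmult_lt_0_compat; try apply exp_pos; lra).
    lra.
Qed.

Lemma score_exp_excess L beta : (0 < n)%nat -> 0 < weighted_sum L -> 0 < beta ->
  score_exp n s L alpha beta gamma =
  score_exp n s L alpha (beta_hat L) gamma
  + INR n * (beta / beta_hat L - 1 - ln (beta / beta_hat L)).
Proof.
  intros Hn HW Hb; unfold beta_hat.
  assert (HnR : 0 < INR n) by (apply lt_0_INR; lia).
  assert (Hbh : 0 < INR n / weighted_sum L) by (apply Rdiv_lt_0_compat; lra).
  rewrite !score_exp_decomp by lra.
  replace (beta / (INR n / weighted_sum L)) with (beta * / (INR n / weighted_sum L)) by reflexivity.
  rewrite ln_mult, ln_Rinv by (try apply Rinv_0_lt_compat; lra).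
  field; lra.
Qed.

Lemma score_exp_ge_beta_hat L beta : (0 < n)%nat -> 0 < weighted_sum L -> 0 < beta ->
  score_exp n s L alpha (beta_hat L) gamma <= score_exp n s L alpha beta gamma.
Proof.
  intros Hn HW Hb.
  assert (HnR : 0 < INR n) by (apply lt_0_INR; lia).
  assert (Hbh : 0 < beta_hat L) by (apply Rdiv_lt_0_compat; lra).
  rewrite (score_exp_excess L beta) by assumption.
  pose proof (ln_le_sub1 (beta / beta_hat L) ltac:(apply Rdiv_lt_0_compat; lra)).
  assert (0 <= INR n * (beta / beta_hat L - 1 - ln (beta / beta_hat L)))
    by (apply Rmult_le_pos; lra).
  lra.
Qed.

Lemma score_exp_near_beta_hat L beta eps : (0 < n)%nat -> 0 < weighted_sum L ->
  beta_hat L <= beta < (1 + eps) * beta_hat L ->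
  score_exp n s L alpha beta gamma <=
  score_exp n s L alpha (beta_hat L) gamma + INR n * eps.
Proof.
  intros Hn HW [Hlo Hhi].
  assert (HnR : 0 < INR n) by (apply lt_0_INR; lia).
  assert (Hbh : 0 < beta_hat L) by (apply Rdiv_lt_0_compat; lra).
  rewrite (score_exp_excess L beta) by (assumption || lra).
  assert (Hratio : 1 <= beta / beta_hat L < 1 + eps).
  { assert (beta = beta / beta_hat L * beta_hat L) by (field; lra).
    split; [apply Rmult_le_reg_r with (beta_hat L)|apply Rmult_lt_reg_r with (beta_hat L)];
      lra. }
  pose proof (ln_nonneg (beta / beta_hat L) (proj1 Hratio)).
  apply Rplus_le_compat_l, Rmult_le_compat_l; lra.
Qed.

Lemma score_exp_ge_sum_ln L beta :
  (forall i, (1 <= i <= n)%nat -> 0 < s i) -> 0 <= gamma -> 0 < beta ->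
  INR n + sum1n n (fun i => ln (s i)) <= score_exp n s L alpha beta gamma.
Proof.
  intros Hs Hg Hb; unfold score_exp.
  rewrite <- (Rmult_1_r (INR n)), <- sum1n_const, <- sum1n_add.
  apply sum1n_le; intros i Hi; unfold p_exp, pen.
  set (l := beta * alpha ^ L i).
  assert (Hl : 0 < l) by (apply Rmult_lt_0_compat; [lra|apply pow_lt; lra]).
  assert (Hsi : 0 < s i) by auto.
  pose proof (ln_le_sub1 (l * s i) ltac:(apply Rmult_lt_0_compat; lra)) as Hls.
  rewrite ln_mult in Hls by lra.
  rewrite ln_mult, ln_exp by (try apply exp_pos; lra).
  assert (0 <= Rmax (INR (L i) - INR (prevlvl L i)) 0) by apply Rmax_r.
  assert (0 <= ln (INR n)) by (apply ln_nonneg, (le_INR 1); lia).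
  assert (0 <= Rmax (INR (L i) - INR (prevlvl L i)) 0 * gamma * ln (INR n))
    by (repeat apply Rmult_le_pos; lra).
  lra.
Qed.

End ScoreForFixedLevels.

Lemma weighted_sum_bounds n s alpha k L : 1 <= alpha -> level_seq n k L ->
  (forall i, (1 <= i <= n)%nat -> 0 < s i) ->
  sum1n n s <= weighted_sum n s alpha L <= alpha ^ k * sum1n n s.
Proof.
  intros Ha HL Hs; unfold weighted_sum; rewrite <- sum1n_scal; split;
    apply sum1n_le; intros i Hi; pose proof (Hs i Hi).
  - pose proof (pow_R1_Rle alpha (L i) Ha); nra.
  - pose proof (Rle_pow alpha (L i) k Ha (HL i Hi)); nra.
Qed.

Lemma beta_hat_range n s alpha k L : (0 < n)%nat -> 1 <= alpha -> level_seq n k L ->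
  (forall i, (1 <= i <= n)%nat -> 0 < s i) ->
  1 / (alpha ^ k * mean n s) <= beta_hat n s alpha L <= 1 / mean n s.
Proof.
  intros Hn Ha HL Hs; unfold beta_hat, mean.
  assert (HnR : 0 < INR n) by (apply lt_0_INR; lia).
  assert (HS : 0 < sum1n n s) by (apply sum1n_pos; assumption).
  destruct (weighted_sum_bounds n s alpha k L Ha HL Hs) as [Hlo Hhi].
  replace (1 / (alpha ^ k * (sum1n n s / INR n))) with (INR n / (alpha ^ k * sum1n n s))
    by (field; repeat split; try apply pow_nonzero; lra).
  replace (1 / (sum1n n s / INR n)) with (INR n / sum1n n s) by (field; lra).
  split; apply Rmult_le_compat_l, Rinv_le_contravar; lra.
Qed.

Lemma tested_beta_j_near n s alpha k eps b : 0 < mean n s -> 0 < eps ->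
  1 / (alpha ^ k * mean n s) <= b <= 1 / mean n s -> 0 < b ->
  exists j, tested n s alpha k eps j /\ b <= beta_j n s eps j < (1 + eps) * b.
Proof.
  intros Hmean Heps [Hlo Hhi] Hb.
  destruct (geometric_grid_hit (1 / mean n s) (1 + eps) b) as [j Hj]; [lra|lra|].
  exists j; unfold tested, beta_j; split; lra.
Qed.

Lemma expalpha_out_score_le n s alpha gamma k eps L beta j L' :
  expalpha_out n s alpha gamma k eps L beta ->
  tested n s alpha k eps j -> level_seq n k L' ->
  score_exp n s L alpha beta gamma <= score_exp n s L' alpha (beta_j n s eps j) gamma.
Proof.
  intros [Ls [j0 [Hviterbi [_ [-> [-> Hbest]]]]]] Hj HL'.
  apply Rle_trans with (score_exp n s (Ls j) alpha (beta_j n s eps j) gamma).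
  - exact (Hbest j Hj).
  - exact (proj2 (Hviterbi j Hj) L' HL').
Qed.

Lemma expalpha_out_additive_bound n s alpha gamma k eps Lopt bopt L beta :
  (0 < n)%nat -> (forall i, (1 <= i <= n)%nat -> 0 < s i) -> 1 <= alpha -> 0 < eps ->
  exp_optimal n s alpha gamma k Lopt bopt ->
  expalpha_out n s alpha gamma k eps L beta ->
  score_exp n s L alpha beta gamma <= score_exp n s Lopt alpha bopt gamma + INR n * eps.
Proof.
  intros Hn Hs Ha Heps [HLopt [Hbopt _]] Hout.
  assert (HnR : 0 < INR n) by (apply lt_0_INR; lia).
  assert (HW : 0 < weighted_sum n s alpha Lopt).
  { pose proof (sum1n_pos n s Hn Hs).
    pose proof (weighted_sum_bounds n s alpha k Lopt Ha HLopt Hs); lra. }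
  assert (Hbh : 0 < beta_hat n s alpha Lopt) by (apply Rdiv_lt_0_compat; lra).
  assert (Hmean : 0 < mean n s) by (apply Rdiv_lt_0_compat; [apply sum1n_pos|]; assumption).
  destruct (tested_beta_j_near n s alpha k eps (beta_hat n s alpha Lopt)) as [j [Hj Hnear]];
    try assumption.
  { apply beta_hat_range; assumption. }
  eapply Rle_trans; [exact (expalpha_out_score_le _ _ _ _ _ _ _ _ j Lopt Hout Hj HLopt)|].
  eapply Rle_trans; [apply score_exp_near_beta_hat; eassumption || lra|].
  apply Rplus_le_compat_r, score_exp_ge_beta_hat; assumption || lra.
Qed.

Lemma ln_geo_mean n s : (0 < n)%nat -> (forall i, (1 <= i <= n)%nat -> 0 < s i) ->
  INR n * ln (geo_mean n s) = sum1n n (fun i => ln (s i)).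
Proof.
  intros Hn Hs; unfold geo_mean.
  assert (HnR : 0 < INR n) by (apply lt_0_INR; lia).
  rewrite ln_Rpower, ln_prod1n by assumption.
  field; lra.
Qed.

Theorem proposition6 (n : nat) (s : nat -> R) (alpha gamma : R) (k : nat)
  (eps : R) (Lopt : nat -> nat) (bopt : R) (L : nat -> nat) (beta : R) :
  (0 < n)%nat ->
  (forall i, (1 <= i <= n)%nat -> 0 < s i) ->
  1 < alpha -> 0 < gamma -> (0 < k)%nat -> 0 < eps ->
  exp_optimal n s alpha gamma k Lopt bopt ->
  expalpha_out n s alpha gamma k eps L beta ->
  (score_exp n s L alpha beta gamma - INR n * ln (geo_mean n s)
     <= (1 + eps) * (score_exp n s Lopt alpha bopt gamma - INR n * ln (geo_mean n s)))
  /\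
  (geo_mean n s >= 1 ->
     score_exp n s L alpha beta gamma <= (1 + eps) * score_exp n s Lopt alpha bopt gamma).
Proof.
  intros Hn Hs Ha Hg _ Heps Hopt Hout.
  pose proof (expalpha_out_additive_bound n s alpha gamma k eps Lopt bopt L beta
                Hn Hs ltac:(lra) Heps Hopt Hout) as Hadd.
  assert (Hlower : INR n + INR n * ln (geo_mean n s) <= score_exp n s Lopt alpha bopt gamma).
  { rewrite ln_geo_mean by assumption.
    apply score_exp_ge_sum_ln; [lra|assumption|lra|apply Hopt]. }
  assert (HnR : 0 < INR n) by (apply lt_0_INR; lia).
  split.
  - nra.
  - intros Hg1.
    assert (0 <= INR n * ln (geo_mean n s)) by (apply Rmult_le_pos; [|apply ln_nonneg]; lra).
    nra.
Qed.
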